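(* Let $S=\{1,\dots,k\}$ with $k\ge3$ and $c\in\mathbb{R}_+$. Both $\rho_c$ and $\overline\rho_c$ are t-monotone submodular functions on $2^{S^\pm}$, and $B_c=\mathcal{B}(\rho_c)$, $\overline B_c=\mathcal{B}(\overline\rho_c)$.
   Context: $S^\pm=S\times\{\pm1\}$, $i^\pm=(i,\pm1)$, $S^\pm\supseteq S^+=\{i^+\}$, $S^-=\{i^-\}$. For $X\subseteq S^\pm$ write $X^+=X\cap S^+$, $X^-=X\cap S^-$, and let $\underline X$ be obtained from $X$ by removing every pair $\{i^+,i^-\}\subseteq X$. A function $\rho$ on $2^{S^\pm}$ with $\rho(\emptyset)=0$ is submodular if $\rho(X)+\rho(Y)\ge\rho(X\cap Y)+\rho(X\cup Y)$, t-monotone if $\rho(\underline X)\le\rho(X)$ for all $X$; $\mathcal{B}(\rho)=\{x\in\mathbb{R}^{S^\pm}:x(S^\pm)=\rho(S^\pm),\ x(X)\le\rho(X)\ \forall X\}$. Types: for $u,v\in\{0,1,2\}$, $X$ is of type $uv$ if $|X^+|=u$ when $u\in\{0,1\}$ and $|X^+|\ge2$ when $u=2$, and $|X^-|=k-v$ when $v\in\{0,1\}$ and $|X^-|\le k-2$ when $v=2$. $X$ is of type $11^*$ if $X^+=\{i^+\}$ and $X^-=S^-\setminus\{i^-\}$ for some $i\in S$; ''type 11'' means type 11 but not type $11^*$. Define $\rho_c(X)=2c$ if $X$ is of type 22, $\rho_c(X)=c$ if $X$ is of type 11, 12 or 21, and $\rho_c(X)=0$ otherwise; and $\overline\rho_c(X)=c\,(\min\{|X^+|,2\}+\min\{k-2-|X^-|,0\})$.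 $B_c$ is the set of $x\in\mathbb{R}^{S^\pm}$ with $x(S^\pm)=0$, $x(S^+)\le 2c$, $x(i^+)+x(S^-\setminus\{i^-\})\le0$ ($i\in S$), $0\le x(i^+)\le c$ and $-c\le x(i^-)\le0$ ($i\in S$); $\overline B_c$ consists of $x\in B_c$ with additionally $x(S^-)\le-2c$. *)

From HB Require Import structures.
From mathcomp Require Import all_boot all_order all_algebra.
Set Implicit Arguments. Unset Strict Implicit. Unset Printing Implicit Defensive.
Import Order.TTheory GRing.Theory Num.Theory.
Local Open Scope ring_scope.

(* S = 'I_k (i.e. {0,...,k-1}, a relabelling of {1,...,k});
   S^pm = 'I_k * bool, with (i, true) = i^+ and (i, false) = i^-. *)
Definition Spm (k : nat) : finType := ('I_k * bool)%type.

Section Defs.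
Variable k : nat.
Variable R : realFieldType.

Definition plus_part (X : {set Spm k}) : {set Spm k} := [set p in X | p.2].
Definition minus_part (X : {set Spm k}) : {set Spm k} := [set p in X | ~~ p.2].

Definition reduce (X : {set Spm k}) : {set Spm k} :=
  [set p in X | (p.1, ~~ p.2) \notin X].

Definition submodular (rho : {set Spm k} -> R) : Prop :=
  forall X Y : {set Spm k}, rho (X :&: Y) + rho (X :|: Y) <= rho X + rho Y.

Definition t_monotone (rho : {set Spm k} -> R) : Prop :=
  forall X : {set Spm k}, rho (reduce X) <= rho X.

Definition xsum (x : Spm k -> R) (X : {set Spm k}) : R := \sum_(p in X) x p.

Definition in_base (rho : {set Spm k} -> R) (x : Spm k -> R) : Prop :=
  xsum x [set: Spm k] = rho [set: Spm k] /\
  forall X : {set Spm k}, xsum x X <= rho X.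

Definition ptype (X : {set Spm k}) (u : nat) : bool :=
  match u with
  | 0%N => #|plus_part X| == 0%N
  | 1%N => #|plus_part X| == 1%N
  | _ => (2 <= #|plus_part X|)%N
  end.
Definition mtype (X : {set Spm k}) (v : nat) : bool :=
  match v with
  | 0%N => #|minus_part X| == k
  | 1%N => #|minus_part X| == k.-1
  | _ => (#|minus_part X| <= k - 2)%N
  end.
Definition is_type (X : {set Spm k}) (u v : nat) : bool := ptype X u && mtype X v.

Definition is_type11star (X : {set Spm k}) : bool :=
  [exists i : 'I_k, (plus_part X == [set ((i, true) : Spm k)]) &&
                    (minus_part X == [set p : Spm k | ~~ p.2 & p.1 != i])].

Definition rho_c (c : R) (X : {set Spm k}) : R :=
  if is_type X 2 2 then 2 * c
  else if [|| is_type X 1 1 && ~~ is_type11star X, is_type X 1 2 | is_type X 2 1]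
  then c else 0.

Definition rhobar_c (c : R) (X : {set Spm k}) : R :=
  c * ((Num.min (#|plus_part X|%:Z) 2) + Num.min (k%:Z - 2 - #|minus_part X|%:Z) 0)%:~R.

Definition in_Bc (c : R) (x : Spm k -> R) : Prop :=
  [/\ xsum x [set: Spm k] = 0,
      xsum x [set p : Spm k | p.2] <= 2 * c,
      forall i : 'I_k,
        x (i, true) + xsum x [set p : Spm k | ~~ p.2 & p.1 != i] <= 0,
      forall i : 'I_k, 0 <= x (i, true) <= c
    & forall i : 'I_k, - c <= x (i, false) <= 0].

Definition in_Bbar_c (c : R) (x : Spm k -> R) : Prop :=
  in_Bc c x /\ xsum x [set p : Spm k | ~~ p.2] <= - (2 * c).

End Defs.

(* Describe X by the pair (P, Q) = (pos X, ~: neg X) of the indices i with i^+ in X and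
   those with i^- not in X.  Both functions depend only on this pair: rhobar_c is
   c (min(|P|, 2) + min(|Q|, 2) - 2), and rho_c is c times min(|P|, |Q|, 2), except that it
   vanishes when P = Q is a singleton, i.e. on the sets of type 11*; this is c times the
   size, capped at 2, of a largest matching of P to Q avoiding the pairs (i, i).
   Intersection and union of sets turn into (P :&: P', Q :|: Q') and (P :|: P', Q :&: Q'),
   so submodularity becomes an inequality on pairs: a count of truncated cardinalities, plus
   a short case analysis for type 11*.  Underlining X gives the pair (P :&: Q, Q :|: P), so
   t-monotonicity follows from the same inequality applied to (P, Q) and (Q, P), both
   functions being symmetric in P and Q.
   For the bases, the box constraints and x(S^pm) = 0 give x(X^+) <= c min(|P|, 2),
   x(X^-) <= 0 and x(X) <= c |Q|, and also x(X^-) <= c (min(|Q|, 2) - 2) when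
   x(S^-) <= -2c; hence x(X) <= rho(X).  Conversely, every defining inequality of B_c is
   x(X) <= rho(X) for one of a handful of explicit sets X. *)

From mathcomp Require Import all_boot all_order all_algebra.
From mathcomp Require Import zify lra.
Set Implicit Arguments. Unset Strict Implicit. Unset Printing Implicit Defensive.
Import Order.TTheory GRing.Theory Num.Theory.

Section PairRank.
Variable T : finType.
Implicit Types A B : {set T}.

Definition trunc_card A : nat := minn #|A| 2.

Definition same_singleton A B : bool := [exists i, (A == [set i]) && (B == [set i])].

Definition pair_rank A B : nat := minn (trunc_card A) #|B| - same_singleton A B.

Lemma trunc_card_submod A B :
  trunc_card (A :&: B) + trunc_card (A :|: B) <= trunc_card A + trunc_card B.
Proof.
have := cardsUI A B; have := subset_leq_card (subsetIl A B).
have := subset_leq_card (subsetIr A B); rewrite /trunc_card; lia.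
Qed.

Lemma same_singletonC A B : same_singleton A B = same_singleton B A.
Proof. by apply: eq_existsb => i; rewrite andbC. Qed.

Lemma pair_rankC A B : pair_rank A B = pair_rank B A.
Proof. by rewrite /pair_rank same_singletonC /trunc_card; congr (_ - _); lia. Qed.

Lemma trunc_card_gt1 A : 1 < #|A| -> trunc_card A = 2.
Proof. by rewrite /trunc_card; lia. Qed.

Lemma pair_rank_le A B : pair_rank A B <= minn (trunc_card A) #|B|.
Proof. exact: leq_subr. Qed.

Lemma pair_rank0l B : pair_rank set0 B = 0.
Proof. by rewrite /pair_rank /trunc_card cards0 !min0n. Qed.

Lemma pair_rank0r A : pair_rank A set0 = 0.
Proof. by rewrite /pair_rank cards0 minn0. Qed.

Lemma pair_rank_set1 i : pair_rank [set i] [set i] = 0.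
Proof.
rewrite /pair_rank /trunc_card cards1.
by rewrite (_ : same_singleton _ _) //; apply/existsP; exists i; rewrite eqxx.
Qed.

Lemma same_singletonP A B :
  reflect (exists i, A = [set i] /\ B = [set i]) (same_singleton A B).
Proof.
apply: (iffP existsP) => -[i]; first by case/andP => /eqP-> /eqP->; exists i.
by case=> -> ->; exists i; rewrite eqxx.
Qed.

Lemma pair_rank_gt0 A B :
  reflect (exists i j, [/\ i \in A, j \in B & i != j]) (0 < pair_rank A B).
Proof.
apply: (iffP idP) => [rk_gt0 | [i [j [iA jB ij]]]].
  have [/card_gt0P[i iA] /card_gt0P[j jB]] : 0 < #|A| /\ 0 < #|B|.
    by move: (pair_rank_le A B); rewrite /trunc_card; lia.
  have nsame : ~~ same_singleton A B.
    by apply: contraTN rk_gt0 => /same_singletonP[l [-> ->]]; rewrite pair_rank_set1.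
  case: (eqVneq i j) jB => [<- iB|]; last by exists i, j.
  have sub1 (C : {set T}) : i \in C -> C \subset [set i] -> C = [set i].
    by move=> iC; rewrite subset1 => /orP[/eqP // | /eqP C0]; rewrite C0 inE in iC.
  have [/(sub1 _ iA) A1 | /subsetPn[a aA]] := boolP (A \subset [set i]).
    have [/(sub1 _ iB) B1 | /subsetPn[b bB]] := boolP (B \subset [set i]).
      by case/negP: nsame; apply/same_singletonP; exists i.
    by rewrite inE => bi; exists i, b; rewrite eq_sym.
  by rewrite inE => ai; exists a, i.
have nsame : ~~ same_singleton A B.
  apply/same_singletonP => -[l [A1 B1]].
  by move: iA jB ij; rewrite A1 B1 !inE => /eqP-> /eqP->; rewrite eqxx.
have A0 : 0 < #|A| by apply/card_gt0P; exists i.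
have B0 : 0 < #|B| by apply/card_gt0P; exists j.
by rewrite /pair_rank (negbTE nsame) /trunc_card; lia.
Qed.

Lemma pair_rank_eq2 A B : 1 < #|A| -> 1 < #|B| -> pair_rank A B = 2.
Proof.
move=> A2 B2; rewrite /pair_rank /trunc_card.
have -> : same_singleton A B = false.
  by apply/same_singletonP => -[i [A1 _]]; rewrite A1 cards1 in A2.
lia.
Qed.

Lemma pair_rank_submod_set1 i A B :
  pair_rank ([set i] :&: A) ([set i] :|: B) + pair_rank ([set i] :|: A) ([set i] :&: B)
  <= pair_rank A B.
Proof.
set L := pair_rank _ _; set U := pair_rank _ _.
have card_set1I C : #|[set i] :&: C| <= 1 by rewrite -(cards1 i) subset_leq_card ?subsetIl.
have L_le1 : L <= 1.
  by apply: leq_trans (pair_rank_le _ _) _; have := card_set1I A; rewrite /trunc_card; lia.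
have U_le1 : U <= 1 by apply: leq_trans (pair_rank_le _ _) _; have := card_set1I B; lia.
have L_pair : 0 < L -> i \in A /\ exists2 j, j \in B & i != j.
  case/pair_rank_gt0 => _ [j [/setIP[/set1P-> iA] /setUP[/set1P-> | jB] ij]].
    by rewrite eqxx in ij.
  by split; last exists j.
have U_pair : 0 < U -> i \in B /\ exists2 a, a \in A & a != i.
  case/pair_rank_gt0 => a [_ [/setUP[/set1P-> | aA] /setIP[/set1P-> iB] ai]].
    by rewrite eqxx in ai.
  by split; last exists a.
case: (posnP L) => [-> | /L_pair[iA [j jB ij]]]; case: (posnP U) => [-> | /U_pair[iB [a aA ai]]].
- by [].
- by apply: leq_trans U_le1 _; apply/pair_rank_gt0; exists a, i.
- by rewrite addn0; apply: leq_trans L_le1 _; apply/pair_rank_gt0; exists i, j.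
rewrite pair_rank_eq2; first by lia.
  by apply/card_gt1P; exists a, i.
by apply/card_gt1P; exists i, j.
Qed.

Lemma pair_rank_submod A A' B B' :
  pair_rank (A :&: A') (B :|: B') + pair_rank (A :|: A') (B :&: B')
  <= pair_rank A B + pair_rank A' B'.
Proof.
have [/same_singletonP[i [-> ->]] | nAB] := boolP (same_singleton A B).
  by rewrite pair_rank_set1 add0n pair_rank_submod_set1.
have [/same_singletonP[i [-> ->]] | nAB'] := boolP (same_singleton A' B').
  by rewrite pair_rank_set1 addn0 (setIC A) (setUC B) (setUC A) (setIC B) pair_rank_submod_set1.
rewrite {3 4}/pair_rank (negbTE nAB) (negbTE nAB') !subn0.
apply: leq_trans (leq_add (pair_rank_le _ _) (pair_rank_le _ _)) _.
have := cardsUI A A'; have := subset_leq_card (subsetIl A A'); have := subset_leq_card (subsetIr A A').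
have := cardsUI B B'; have := subset_leq_card (subsetIl B B'); have := subset_leq_card (subsetIr B B').
rewrite /trunc_card; lia.
Qed.

End PairRank.

Local Open Scope ring_scope.

Section Signed.
Variable k : nat.
Implicit Types (A B : {set 'I_k}) (X Y : {set Spm k}).

Definition signed A B : {set Spm k} := [set p | p.1 \in if p.2 then A else B].
Definition pos X : {set 'I_k} := [set i | (i, true) \in X].
Definition neg X : {set 'I_k} := [set i | (i, false) \in X].

Lemma signedK X : signed (pos X) (neg X) = X.
Proof. by apply/setP => -[i []]; rewrite !inE. Qed.

Lemma pos_signed A B : pos (signed A B) = A.
Proof. by apply/setP => i; rewrite !inE. Qed.

Lemma neg_signed A B : neg (signed A B) = B.
Proof. by apply/setP => i; rewrite !inE. Qed.

Lemma big_signed (V : nmodType) (F : Spm k -> V) A B :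
  \sum_(p in signed A B) F p = \sum_(i in A) F (i, true) + \sum_(i in B) F (i, false).
Proof.
rewrite (eq_bigr (fun p => F (p.1, p.2))) => [|[] //].
rewrite (eq_bigl (fun p => predT p.1 && (p.1 \in if p.2 then A else B))) => [|p]; last by rewrite inE.
rewrite -(pair_big_dep predT (fun i b => i \in if b then A else B) (fun i b => F (i, b))).
rewrite [X in _ = X + _]big_mkcond [X in _ = _ + X]big_mkcond -big_split /=.
by apply: eq_bigr => i _; rewrite big_mkcond big_bool.
Qed.

Lemma card_signed A B : #|signed A B| = (#|A| + #|B|)%N.
Proof. by rewrite -!sum1_card big_signed. Qed.

Lemma pos_setT : pos [set: Spm k] = setT.
Proof. by apply/setP => i; rewrite !inE. Qed.

Lemma neg_setT : neg [set: Spm k] = setT.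
Proof. by apply/setP => i; rewrite !inE. Qed.

Lemma pos_set0 : pos set0 = set0.
Proof. by apply/setP => i; rewrite !inE. Qed.

Lemma neg_set0 : neg set0 = set0.
Proof. by apply/setP => i; rewrite !inE. Qed.

Lemma posI X Y : pos (X :&: Y) = pos X :&: pos Y.
Proof. by apply/setP => i; rewrite !inE. Qed.

Lemma posU X Y : pos (X :|: Y) = pos X :|: pos Y.
Proof. by apply/setP => i; rewrite !inE. Qed.

Lemma negI X Y : neg (X :&: Y) = neg X :&: neg Y.
Proof. by apply/setP => i; rewrite !inE. Qed.

Lemma negU X Y : neg (X :|: Y) = neg X :|: neg Y.
Proof. by apply/setP => i; rewrite !inE. Qed.

Lemma pos_reduce X : pos (reduce X) = pos X :\: neg X.
Proof. by apply/setP => i; rewrite !inE andbC. Qed.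

Lemma neg_reduce X : neg (reduce X) = neg X :\: pos X.
Proof. by apply/setP => i; rewrite !inE andbC. Qed.

Lemma plus_part_signed X : plus_part X = signed (pos X) set0.
Proof. by apply/setP => -[i []]; rewrite !inE ?andbT ?andbF. Qed.

Lemma minus_part_signed X : minus_part X = signed set0 (neg X).
Proof. by apply/setP => -[i []]; rewrite !inE ?andbT ?andbF. Qed.

Lemma eq_signed A B A' B' : (signed A B == signed A' B') = (A == A') && (B == B').
Proof.
apply/eqP/andP => [eq_AB | [/eqP-> /eqP->] //].
move: (congr1 pos eq_AB) (congr1 neg eq_AB).
by rewrite !pos_signed !neg_signed => -> ->; rewrite !eqxx.
Qed.

Lemma is_type11starE X : is_type11star X = same_singleton (pos X) (~: neg X).
Proof.
apply: eq_existsb => i; rewrite plus_part_signed minus_part_signed.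
have -> : [set (i, true)] = signed [set i] set0 :> {set Spm k}.
  by apply/setP => -[j []]; rewrite !inE xpair_eqE ?andbT ?andbF.
have -> : [set p : Spm k | ~~ p.2 & p.1 != i] = signed set0 [set~ i].
  by apply/setP => -[j []]; rewrite !inE.
rewrite !eq_signed !eqxx andbT andTb; congr (_ && _).
by rewrite -[in RHS](inj_eq (@setC_inj _)) setCK.
Qed.

End Signed.

Section PairSubmodular.
Variables (k : nat) (R : realFieldType).
Implicit Types (A B : {set 'I_k}) (X : {set Spm k}).

Definition pair_submodular (phi : {set 'I_k} -> {set 'I_k} -> R) : Prop :=
  forall A A' B B',
  phi (A :&: A') (B :|: B') + phi (A :|: A') (B :&: B') <= phi A B + phi A' B'.

Lemma pair_submodular_rank (c : R) :
  0 <= c -> pair_submodular (fun A B => c * (pair_rank A B)%:R).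
Proof.
by move=> c0 A A' B B'; rewrite -!mulrDr -!natrD ler_wpM2l // ler_nat pair_rank_submod.
Qed.

Lemma pair_submodular_trunc (c : R) :
  0 <= c -> pair_submodular (fun A B => c * (trunc_card A + trunc_card B)%:R - 2 * c).
Proof.
move=> c0 A A' B B'.
have : c * (trunc_card (A :&: A') + trunc_card (B :|: B') +
            (trunc_card (A :|: A') + trunc_card (B :&: B')))%:R
       <= c * (trunc_card A + trunc_card B + (trunc_card A' + trunc_card B'))%:R.
  rewrite ler_wpM2l // ler_nat.
  by have := trunc_card_submod A A'; have := trunc_card_submod B B'; lia.
rewrite !natrD !mulrDr; lra.
Qed.

Variables (phi : {set 'I_k} -> {set 'I_k} -> R) (rho : {set Spm k} -> R).
Hypothesis rhoE : forall X, rho X = phi (pos X) (~: neg X).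

Lemma submodular_of_pair : pair_submodular phi -> submodular rho.
Proof. by move=> phi_sub X Y; rewrite !rhoE posI posU negI negU setCI setCU phi_sub. Qed.

Lemma t_monotone_of_pair :
  pair_submodular phi -> (forall A B, phi A B = phi B A) -> t_monotone rho.
Proof.
move=> phi_sub phiC X; rewrite !rhoE pos_reduce neg_reduce !setDE setCI setCK.
set A := pos X; set B := ~: neg X.
have := phi_sub A B B A.
by rewrite (phiC (A :|: B)) (phiC B) (setIC B) (setUC A); lra.
Qed.

End PairSubmodular.

Section RankFunctions.
Variables (k : nat) (R : realFieldType).
Implicit Types X : {set Spm k}.

(* For k = 1 the truncated k - 2 would make type 22 overlap type 21. *)
Lemma rho_cE (c : R) X : (1 < k)%N -> rho_c c X = c * (pair_rank (pos X) (~: neg X))%:R.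
Proof.
move=> k_gt1; rewrite /rho_c /is_type /ptype /mtype is_type11starE.
rewrite plus_part_signed minus_part_signed !card_signed cards0 addn0 add0n.
have card_neg := cardsC (neg X); rewrite card_ord in card_neg.
have star_card : same_singleton (pos X) (~: neg X) -> #|pos X| = 1%N /\ #|~: neg X| = 1%N.
  by case/same_singletonP => i [-> ->]; rewrite cards1.
rewrite /pair_rank /trunc_card; case: (same_singleton _ _) star_card => [/(_ isT) [? ?] | _].
all: case: ifP => ?; first by rewrite (_ : (_ - _)%N = 2%N) 1?mulrC //; lia.
all: case: ifP => ?; first by rewrite (_ : (_ - _)%N = 1%N) ?mulr1 //; lia.
all: by rewrite (_ : (_ - _)%N = 0%N) ?mulr0 //; lia.
Qed.

Lemma rhobar_cE (c : R) X :
  rhobar_c c X = c * (trunc_card (pos X) + trunc_card (~: neg X))%:R - 2 * c.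
Proof.
rewrite /rhobar_c plus_part_signed minus_part_signed !card_signed cards0 addn0 add0n.
have := cardsC (neg X); rewrite card_ord /trunc_card => card_neg.
rewrite (_ : _ + _ = (minn #|pos X| 2 + minn #|~: neg X| 2)%:Z - 2); last by lia.
by rewrite intrB mulrBr (mulrC c 2%:~R).
Qed.

End RankFunctions.

Section BasePolyhedra.
Variables (k : nat) (R : realFieldType) (c : R) (x : Spm k -> R).
Implicit Types (A B : {set 'I_k}) (X : {set Spm k}).

Local Notation sum_pos A := (\sum_(i in A) x (i, true)).
Local Notation sum_neg B := (\sum_(i in B) x (i, false)).

Lemma xsum_signed A B : xsum x (signed A B) = sum_pos A + sum_neg B.
Proof. exact: big_signed. Qed.

Lemma xsum_setT : xsum x [set: Spm k] = sum_pos setT + sum_neg setT.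
Proof.
by rewrite -xsum_signed; congr xsum; apply/setP => -[i []]; rewrite !inE.
Qed.

Lemma xsum_plus : xsum x [set p : Spm k | p.2] = sum_pos setT.
Proof.
rewrite (_ : [set p | p.2] = signed setT set0) ?xsum_signed ?big_set0 ?addr0 //.
by apply/setP => -[i []]; rewrite !inE.
Qed.

Lemma xsum_minus : xsum x [set p : Spm k | ~~ p.2] = sum_neg setT.
Proof.
rewrite (_ : [set p | ~~ p.2] = signed set0 setT) ?xsum_signed ?big_set0 ?add0r //.
by apply/setP => -[i []]; rewrite !inE.
Qed.

Lemma xsum_minus_but i : xsum x [set p : Spm k | ~~ p.2 & p.1 != i] = sum_neg [set~ i].
Proof.
rewrite (_ : [set p | _ & _] = signed set0 [set~ i]) ?xsum_signed ?big_set0 ?add0r //.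
by apply/setP => -[j []]; rewrite !inE.
Qed.

Lemma in_BcE : in_Bc c x <->
  [/\ sum_pos setT + sum_neg setT = 0, sum_pos setT <= 2 * c,
      forall i, x (i, true) + sum_neg [set~ i] <= 0,
      forall i, 0 <= x (i, true) <= c
    & forall i, - c <= x (i, false) <= 0].
Proof.
rewrite /in_Bc xsum_setT xsum_plus.
split=> -[sum0 plus_le2 star x_pos x_neg]; split=> // i.
  by rewrite -xsum_minus_but.
by rewrite xsum_minus_but.
Qed.

Lemma sum_setTC (b : bool) A :
  \sum_(i in setT) x (i, b) = \sum_(i in A) x (i, b) + \sum_(i in ~: A) x (i, b).
Proof. by rewrite (big_setID A) setTI setTD. Qed.

Section Bounds.
Hypothesis sum_eq0 : sum_pos setT + sum_neg setT = 0.
Hypothesis sum_pos_le2 : sum_pos setT <= 2 * c.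
Hypothesis x_pos : forall i, 0 <= x (i, true) <= c.
Hypothesis x_neg : forall i, - c <= x (i, false) <= 0.

Lemma sum_neg_le0 B : sum_neg B <= 0.
Proof. by apply: sumr_le0 => i _; case/andP: (x_neg i). Qed.

Lemma sum_pos_le_trunc A : sum_pos A <= c * (trunc_card A)%:R.
Proof.
rewrite /trunc_card; case: (leqP #|A| 2%N) => _.
  rewrite mulr_natr -sumr_const.
  by apply: ler_sum => i _; case/andP: (x_pos i).
rewrite mulrC; apply: le_trans sum_pos_le2.
by rewrite (sum_setTC true A) lerDl; apply: sumr_ge0 => i _; case/andP: (x_pos i).
Qed.

Lemma sum_le_card_compl A B : sum_pos A + sum_neg B <= c * #|~: B|%:R.
Proof.
have neg_ge : - (c * #|~: B|%:R) <= sum_neg (~: B).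
  by rewrite mulr_natr -mulNrn -sumr_const; apply: ler_sum => i _; case/andP: (x_neg i).
have pos_le : sum_pos A <= sum_pos setT.
  by rewrite (sum_setTC true A) lerDl; apply: sumr_ge0 => i _; case/andP: (x_pos i).
by have := sum_setTC false B; have := sum_eq0; lra.
Qed.

Lemma sum_le_rank A B :
  (forall i, x (i, true) + sum_neg [set~ i] <= 0) ->
  sum_pos A + sum_neg B <= c * (pair_rank A (~: B))%:R.
Proof.
move=> star.
have [/same_singletonP[i [-> B1]] | nsame] := boolP (same_singleton A (~: B)).
  have -> : B = [set~ i] by rewrite -B1 setCK.
  by rewrite setCK pair_rank_set1 mulr0 big_set1.
rewrite /pair_rank (negbTE nsame) subn0.
case: leqP => _.
  by have := sum_pos_le_trunc A; have := sum_neg_le0 B; lra.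
exact: sum_le_card_compl.
Qed.

Lemma sum_neg_le_trunc B :
  sum_neg setT <= - (2 * c) -> sum_neg B <= c * (trunc_card (~: B))%:R - 2 * c.
Proof.
move=> neg_le2; rewrite /trunc_card; case: (leqP #|~: B| 2%N) => _.
  have : - (c * #|~: B|%:R) <= sum_neg (~: B).
    by rewrite mulr_natr -mulNrn -sumr_const; apply: ler_sum => i _; case/andP: (x_neg i).
  have := sum_setTC false B; lra.
by rewrite mulrC subrr sum_neg_le0.
Qed.

End Bounds.

Section Representation.
Variables (phi : {set 'I_k} -> {set 'I_k} -> R) (rho : {set Spm k} -> R).
Hypothesis rhoE : forall X, rho X = phi (pos X) (~: neg X).

Lemma in_baseP :
  in_base rho x <->
  sum_pos setT + sum_neg setT = phi setT set0 /\
  forall A B, sum_pos A + sum_neg B <= phi A (~: B).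
Proof.
have rho_setT : rho setT = phi setT set0.
  by rewrite rhoE pos_setT neg_setT setCT.
split=> -[full le]; split.
- by rewrite -xsum_setT full rho_setT.
- by move=> A B; have := le (signed A B); rewrite xsum_signed rhoE pos_signed neg_signed.
- by rewrite xsum_setT full rho_setT.
- by move=> X; rewrite rhoE -{1}(signedK X) xsum_signed.
Qed.

(* phi at the pairs of S^pm, S^+, the sets of type 11*, S^pm minus i^+, {i^+}, S^pm minus i^-
   and {i^-}: the inequalities x(X) <= rho(X) at these sets are those defining B_c. *)
Hypothesis phi_full : phi setT set0 = 0.
Hypothesis phi_plus : phi setT setT <= 2 * c.
Hypothesis phi_star : forall i, phi [set i] [set i] <= 0.
Hypothesis phi_drop_pos : forall i, phi [set~ i] set0 <= 0.
Hypothesis phi_pos1 : forall i, phi [set i] setT <= c.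
Hypothesis phi_drop_neg : forall i, phi setT [set i] <= c.
Hypothesis phi_neg1 : forall i, phi set0 [set~ i] <= 0.

Lemma in_Bc_of_base : in_base rho x -> in_Bc c x.
Proof.
case/in_baseP; rewrite phi_full => sum0 le.
have sum_setD1 b i : \sum_(j in setT) x (j, b) = x (i, b) + \sum_(j in [set~ i]) x (j, b).
  by rewrite (big_setD1 i) ?inE // setTD.
apply/in_BcE; split.
- exact: sum0.
- by have := le setT set0; rewrite setC0 big_set0 addr0 => /le_trans; apply.
- by move=> i; have := le [set i] [set~ i]; rewrite big_set1 setCK => /le_trans; apply.
- move=> i; apply/andP; split.
    have := le [set~ i] setT; rewrite setCT.
    by have := sum_setD1 true i; have := phi_drop_pos i; lra.
  by have := le [set i] set0; rewrite big_set1 big_set0 addr0 setC0 => /le_trans; apply.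
- move=> i; apply/andP; split.
    have := le setT [set~ i]; rewrite setCK.
    by have := sum_setD1 false i; have := phi_drop_neg i; lra.
  by have := le set0 [set i]; rewrite big_set0 add0r big_set1 => /le_trans; apply.
Qed.

Lemma in_Bbar_c_of_base : phi set0 set0 <= - (2 * c) -> in_base rho x -> in_Bbar_c c x.
Proof.
move=> phi_minus base; split; first exact: in_Bc_of_base.
case/in_baseP: base => _ /(_ set0 setT).
by rewrite xsum_minus big_set0 add0r setCT => /le_trans; apply.
Qed.

End Representation.

End BasePolyhedra.

Section BasePolyhedraOfRanks.
Variables (k : nat) (R : realFieldType) (c : R).
Hypotheses (k_gt1 : (1 < k)%N) (c_ge0 : 0 <= c).
Implicit Types (A B : {set 'I_k}) (x : Spm k -> R).

Let rank_fun A B := c * (pair_rank A B)%:R.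
Let trunc_fun A B := c * (trunc_card A + trunc_card B)%:R - 2 * c.

Let scale m n : (m <= n)%N -> c * m%:R <= c * n%:R.
Proof. by move=> le_mn; rewrite ler_wpM2l // ler_nat. Qed.

Lemma in_Bc_iff x : in_Bc c x <-> in_base (rho_c c) x.
Proof.
have rhoE X : rho_c c X = rank_fun (pos X) (~: neg X) := rho_cE c X k_gt1.
have rank_le A B n : (minn (trunc_card A) #|B| <= n)%N -> rank_fun A B <= c * n%:R.
  by move=> le_n; apply/scale/(leq_trans (pair_rank_le A B)).
split=> [/in_BcE[sum0 plus_le star x_pos x_neg] | ].
  apply/(in_baseP x rhoE); split=> [|A B]; last exact: sum_le_rank.
  by rewrite /rank_fun pair_rank0r mulr0.
apply: (in_Bc_of_base rhoE) => [||i|i|i|i|i].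
- by rewrite /rank_fun pair_rank0r mulr0.
- by rewrite mulrC; apply: rank_le; rewrite /trunc_card; lia.
- by rewrite /rank_fun pair_rank_set1 mulr0.
- by rewrite /rank_fun pair_rank0r mulr0.
- by rewrite -(mulr1 c); apply: (rank_le _ _ 1); rewrite /trunc_card cards1; lia.
- by rewrite -(mulr1 c); apply: (rank_le _ _ 1); rewrite cards1; lia.
- by rewrite /rank_fun pair_rank0l mulr0.
Qed.

Lemma in_Bbar_c_iff x : in_Bbar_c c x <-> in_base (rhobar_c c) x.
Proof.
have rhoE X : rhobar_c c X = trunc_fun (pos X) (~: neg X) := rhobar_cE c X.
have trunc_le A B n : (trunc_card A + trunc_card B <= n)%N -> trunc_fun A B <= c * n%:R - 2 * c.
  by move=> le_n; rewrite lerD2r scale.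
have full : trunc_fun setT set0 = 0.
  by rewrite /trunc_fun trunc_card_gt1 ?cardsT ?card_ord // /trunc_card cards0 mulrC subrr.
split=> [[/in_BcE[sum0 plus_le _ x_pos x_neg] neg_le] | ].
  apply/(in_baseP x rhoE); split=> [|A B]; first by rewrite full.
  have := sum_pos_le_trunc plus_le x_pos A.
  have := sum_neg_le_trunc x_neg B; rewrite -xsum_minus => /(_ neg_le).
  by rewrite /trunc_fun natrD mulrDr; lra.
move=> base; apply: (in_Bbar_c_of_base rhoE full _ _ _ _ _ _ _ base) => [|i|i|i|i|i|].
- by apply: le_trans (trunc_le _ _ 4 _) _; [rewrite /trunc_card; lia | lra].
- by apply: le_trans (trunc_le _ _ 2 _) _; [rewrite /trunc_card cards1 | lra].
- by apply: le_trans (trunc_le _ _ 2 _) _; [rewrite /trunc_card cards0; lia | lra].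
- by apply: le_trans (trunc_le _ _ 3 _) _; [rewrite /trunc_card cards1; lia | lra].
- by apply: le_trans (trunc_le _ _ 3 _) _; [rewrite /trunc_card cards1; lia | lra].
- by apply: le_trans (trunc_le _ _ 2 _) _; [rewrite /trunc_card cards0; lia | lra].
- by apply: le_trans (trunc_le _ _ 0 _) _; [rewrite /trunc_card cards0 | lra].
Qed.

End BasePolyhedraOfRanks.

Unset Implicit Arguments.

Theorem lemma4p2 (R : realFieldType) (k : nat) (c : R) :
  (3 <= k)%N -> 0 <= c ->
  [/\ @rho_c k R c set0 = 0 /\ t_monotone (@rho_c k R c) /\ submodular (@rho_c k R c),
      @rhobar_c k R c set0 = 0 /\ t_monotone (@rhobar_c k R c) /\ submodular (@rhobar_c k R c),
      (forall x : Spm k -> R, @in_Bc k R c x <-> in_base (@rho_c k R c) x)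
    & (forall x : Spm k -> R, @in_Bbar_c k R c x <-> in_base (@rhobar_c k R c) x)].
Proof.
move=> k_ge3 c_ge0; have k_gt1 : (1 < k)%N by apply: ltnW.
have rhoE X := rho_cE c X k_gt1.
have rhobarE (X : {set Spm k}) := rhobar_cE c X.
have rank_sub := @pair_submodular_rank k R c c_ge0.
have trunc_sub := @pair_submodular_trunc k R c c_ge0.
split; [split; [|split] | split; [|split] | exact: in_Bc_iff | exact: in_Bbar_c_iff].
- by rewrite rhoE pos_set0 pair_rank0l mulr0.
- by apply: (t_monotone_of_pair rhoE rank_sub) => A B; rewrite pair_rankC.
- exact: (submodular_of_pair rhoE rank_sub).
- rewrite rhobarE pos_set0 neg_set0 setC0 /trunc_card cards0 cardsT card_ord.
  by rewrite (minn_idPr k_gt1) min0n mulrC subrr.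
- by apply: (t_monotone_of_pair rhobarE trunc_sub) => A B; rewrite addnC.
- exact: (submodular_of_pair rhobarE trunc_sub).
Qed.
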